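(* There exists $f\in{\rm elh}(\mathbb{C})$ such that the map $L_f:{\rm elh}(\mathbb{C})\to{\rm elh}(\mathbb{C})$, $L_f(g)=f\circ g$, is not injective.
   Context: ${\rm elh}(\mathbb{C})$ denotes the set of entire functions with nowhere vanishing derivative and derivative $1$ at $0$. *)

From Stdlib Require Import Reals.
From Coquelicot Require Export Coquelicot.

(* Complex derivative: Coquelicot's is_derive with scalars K = C_AbsRing
   and values in C_NormedModule, i.e. the limit of (f(w)-f(z))/(w-z), w -> z in C. *)
Definition C_is_derive (f : C -> C) (z l : C) : Prop :=
  @is_derive C_AbsRing C_NormedModule f z l.

Definition elh (f : C -> C) : Prop :=
  (forall z : C, exists l : C, C_is_derive f z l /\ l <> 0%C)
  /\ C_is_derive f 0%C 1%C.

(* Take f = exp.  Since exp (z + 2 pi i) = exp z, composing exp with the identity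
   and with the translation by 2 pi i gives the same function, although both
   translations lie in elh(C).  The complex exponential is built from the real
   exp, cos and sin, and its complex derivative comes from the second-order
   estimate |e^h - 1 - h| = O(|h|^2), assembled from Taylor bounds on each factor. *)
From Stdlib Require Import Reals Lra FunctionalExtensionality.
From Coquelicot Require Import Coquelicot.

Lemma Rabs_cos_sub1_le b : Rabs b <= 2 -> Rabs (cos b - 1) <= b ^ 2 / 2.
Proof.
  intros Hb. destruct (proj1 (Rabs_le_between b 2) Hb) as [Hlo Hhi].
  destruct (pre_cos_bound b 0 Hlo Hhi) as [Hcos _].
  unfold cos_approx, cos_term in Hcos; simpl in Hcos.
  assert (Hcos' : 1 - b ^ 2 / 2 <= cos b) by (eapply Rle_trans; [|exact Hcos]; right; field).
  pose proof (COS_bound b). pose proof (pow2_ge_0 b).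
  apply Rabs_le; split; lra.
Qed.

Lemma sin_sub_id_bounds a : 0 <= a <= 1 -> - (a ^ 2) <= sin a - a <= 0.
Proof.
  intros Ha. destruct (pre_sin_bound a 0 ltac:(lra) ltac:(lra)) as [Hlo Hhi].
  unfold sin_approx, sin_term in Hlo, Hhi; simpl in Hlo, Hhi.
  assert (Hlo' : a - a ^ 3 / 6 <= sin a) by (eapply Rle_trans; [|exact Hlo]; right; field).
  assert (Hhi' : sin a <= a - a ^ 3 / 6 + a ^ 5 / 120) by (eapply Rle_trans; [exact Hhi|]; right; field).
  assert (0 <= a ^ 3 <= a ^ 2) by (split; [apply pow_le; lra | simpl; nra]).
  assert (a ^ 5 <= a ^ 3) by (simpl in *; nra).
  lra.
Qed.

Lemma Rabs_sin_sub_id_le b : Rabs b <= 1 -> Rabs (sin b - b) <= b ^ 2.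
Proof.
  intros Hb. destruct (proj1 (Rabs_le_between b 1) Hb) as [Hlo Hhi].
  destruct (Rle_dec 0 b) as [Hb0 | Hb0].
  - pose proof (sin_sub_id_bounds b (conj Hb0 Hhi)). apply Rabs_le; lra.
  - pose proof (sin_sub_id_bounds (- b) ltac:(lra)) as Hneg.
    rewrite sin_neg in Hneg. apply Rabs_le; nra.
Qed.

(* exp (-a) >= 1 - a gives exp a <= 1 / (1 - a), which is <= 1 + a + 2 a^2 for a <= 1/2. *)
Lemma exp_sub1_sub_id_bounds a : Rabs a <= 1 / 2 -> 0 <= exp a - 1 - a <= 2 * a ^ 2.
Proof.
  intros Ha. destruct (proj1 (Rabs_le_between a (1 / 2)) Ha) as [Hlo Hhi].
  pose proof (exp_ineq1_le a). pose proof (exp_ineq1_le (- a)).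
  assert (Hinv : exp a * exp (- a) = 1) by (rewrite <- exp_plus, Rplus_opp_r; apply exp_0).
  split; [lra | nra].
Qed.

Definition cexp (z : C) : C :=
  (exp (fst z) * cos (snd z), exp (fst z) * sin (snd z)).

Lemma cexp_add z w : cexp (z + w) = (cexp z * cexp w)%C.
Proof.
  destruct z as [x y], w as [u v]. unfold cexp, Cplus, Cmult; simpl.
  rewrite exp_plus, cos_plus, sin_plus. f_equal; ring.
Qed.

Lemma cexp_0 : cexp 0 = 1%C.
Proof. unfold cexp; simpl. rewrite exp_0, cos_0, sin_0. unfold RtoC. f_equal; ring. Qed.

Lemma cexp_neq0 z : cexp z <> 0%C.
Proof.
  destruct z as [x y]. unfold cexp; simpl. intros Hz. injection Hz as Hre Him.
  pose proof (exp_pos x). pose proof (sin2_cos2 y). unfold Rsqr in *.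
  apply Rmult_integral in Hre as [|Hcos]; [lra|].
  apply Rmult_integral in Him as [|Hsin]; [lra|].
  rewrite Hcos, Hsin in *. lra.
Qed.

Definition two_PI_i : C := (0, 2 * PI).

Lemma cexp_two_PI_i : cexp two_PI_i = 1%C.
Proof. unfold cexp, two_PI_i; simpl. rewrite exp_0, cos_2PI, sin_2PI. unfold RtoC. f_equal; ring. Qed.

Lemma cexp_periodic z : cexp (z + two_PI_i) = cexp z.
Proof. rewrite cexp_add, cexp_two_PI_i. apply Cmult_1_r. Qed.

Lemma Cmod_le_Rabs_add z : Cmod z <= Rabs (fst z) + Rabs (snd z).
Proof.
  destruct z as [a b]. simpl.
  replace (a, b) with ((a, 0) + (0, b))%C by (unfold Cplus; simpl; f_equal; ring).
  eapply Rle_trans; [apply Cmod_triangle|].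
  unfold Cmod; simpl.
  replace (a * (a * 1) + 0 * (0 * 1)) with (Rsqr a) by (unfold Rsqr; ring).
  replace (0 * (0 * 1) + b * (b * 1)) with (Rsqr b) by (unfold Rsqr; ring).
  rewrite !sqrt_Rsqr_abs. lra.
Qed.

Lemma Cmod_cexp_sub1_sub_id_le h : Cmod h <= 1 / 2 -> Cmod (cexp h - 1 - h) <= 7 * Cmod h ^ 2.
Proof.
  destruct h as [a b]. set (r := Cmod (a, b)). intros Hr.
  assert (Hr0 : 0 <= r) by apply Cmod_ge_0.
  pose proof (Rmax_Cmod (a, b)) as Hmax; simpl in Hmax; fold r in Hmax.
  assert (Ha : Rabs a <= r) by (eapply Rle_trans; [apply Rmax_l | exact Hmax]).
  assert (Hb : Rabs b <= r) by (eapply Rle_trans; [apply Rmax_r | exact Hmax]).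
  pose proof (exp_sub1_sub_id_bounds a ltac:(lra)) as Hexp.
  pose proof (Rabs_cos_sub1_le b ltac:(lra)) as Hcos.
  pose proof (Rabs_sin_sub_id_le b ltac:(lra)) as Hsin.
  assert (Ha2 : a ^ 2 <= r ^ 2) by (rewrite <- (pow2_abs a); apply pow_incr; split; [apply Rabs_pos | lra]).
  assert (Hb2 : b ^ 2 <= r ^ 2) by (rewrite <- (pow2_abs b); apply pow_incr; split; [apply Rabs_pos | lra]).
  assert (Hexp_le2 : 0 < exp a <= 2) by (split; [apply exp_pos | destruct (proj1 (Rabs_le_between a _) Ha); nra]).
  assert (Hexp1 : Rabs (exp a - 1) <= 2 * r).
  { replace (exp a - 1) with ((exp a - 1 - a) + a) by ring.
    eapply Rle_trans; [apply Rabs_triang|]. rewrite Rabs_pos_eq by lra. nra. }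
  eapply Rle_trans; [apply Cmod_le_Rabs_add|].
  replace (fst (cexp (a, b) - 1 - (a, b))%C) with (exp a * (cos b - 1) + (exp a - 1 - a))
    by (unfold cexp; simpl; ring).
  replace (snd (cexp (a, b) - 1 - (a, b))%C) with (exp a * (sin b - b) + (exp a - 1) * b)
    by (unfold cexp; simpl; ring).
  pose proof (Rabs_triang (exp a * (cos b - 1)) (exp a - 1 - a)).
  pose proof (Rabs_triang (exp a * (sin b - b)) ((exp a - 1) * b)).
  rewrite !Rabs_mult, (Rabs_pos_eq (exp a)), (Rabs_pos_eq (exp a - 1 - a)) in * by lra.
  assert (exp a * Rabs (cos b - 1) <= 2 * (r ^ 2 / 2))
    by (apply Rmult_le_compat; try lra; apply Rabs_pos).
  assert (exp a * Rabs (sin b - b) <= 2 * r ^ 2)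
    by (apply Rmult_le_compat; try lra; apply Rabs_pos).
  assert (Rabs (exp a - 1) * Rabs b <= 2 * r * r)
    by (apply Rmult_le_compat; try lra; apply Rabs_pos).
  simpl in *. lra.
Qed.

Lemma cexp_derive z : C_is_derive cexp z (cexp z).
Proof.
  unfold C_is_derive, is_derive, filterdiff. split; [apply is_linear_scal_l|].
  intros x Hx.
  apply (@is_filter_lim_locally_unique _ (AbsRing_NormedModule C_AbsRing)) in Hx. subst x.
  intros eps. set (M := Cmod (cexp z)).
  assert (HM : 0 <= M) by apply Cmod_ge_0.
  pose proof (cond_pos eps) as Heps.
  set (delta := Rmin (1 / 2) (eps / (7 * (M + 1)))).
  assert (Hdelta_half : delta <= 1 / 2) by apply Rmin_l.
  assert (Hdelta_eps : delta <= eps / (7 * (M + 1))) by apply Rmin_r.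
  assert (Hdelta : 0 < delta) by (apply Rmin_glb_lt; [lra | apply Rdiv_lt_0_compat; lra]).
  exists (mkposreal delta Hdelta). intros y Hy.
  change (Cmod (y - z)%C < delta) in Hy.
  change (Cmod ((cexp y - cexp z) - (y - z) * cexp z)%C <= eps * Cmod (y - z)%C).
  set (h := (y - z)%C) in *. set (r := Cmod h) in *.
  replace y with (z + h)%C by (unfold h; ring).
  rewrite cexp_add.
  replace (cexp z * cexp h - cexp z - h * cexp z)%C with (cexp z * (cexp h - 1 - h))%C by ring.
  rewrite Cmod_mult. fold M.
  assert (Hr0 : 0 <= r) by apply Cmod_ge_0.
  assert (Hr_half : r <= 1 / 2) by lra.
  assert (Hr_eps : r * (7 * (M + 1)) <= eps).
  { apply (Rmult_le_reg_r (/ (7 * (M + 1)))); [apply Rinv_0_lt_compat; lra|].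
    rewrite Rmult_assoc, Rinv_r by lra. unfold Rdiv in *. lra. }
  pose proof (Cmod_cexp_sub1_sub_id_le h Hr_half) as Hsmall. fold r in Hsmall.
  apply Rle_trans with (M * (7 * r ^ 2)); [apply Rmult_le_compat_l; lra | nra].
Qed.

Lemma translation_derive c z : C_is_derive (fun t => (t + c)%C) z 1%C.
Proof.
  unfold C_is_derive, is_derive, filterdiff. split; [apply is_linear_scal_l|].
  intros x _ eps. exists eps. intros y _.
  change (Cmod ((y + c - (x + c)) - (y - x) * 1)%C <= eps * Cmod (y - x)%C).
  assert (Hzero : ((y + c - (x + c)) - (y - x) * 1 = 0)%C) by ring.
  rewrite Hzero, Cmod_0. apply Rmult_le_pos; [left; apply cond_pos | apply Cmod_ge_0].
Qed.

Lemma elh_intro f f' :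
  (forall z, C_is_derive f z (f' z)) -> (forall z, f' z <> 0%C) -> f' 0%C = 1%C -> elh f.
Proof.
  intros Hf Hnz H0. split.
  - intros z. exists (f' z). auto.
  - rewrite <- H0. apply Hf.
Qed.

Lemma elh_cexp : elh cexp.
Proof. exact (elh_intro cexp cexp cexp_derive cexp_neq0 cexp_0). Qed.

Lemma elh_translation c : elh (fun t => (t + c)%C).
Proof.
  apply (elh_intro _ (fun _ => 1%C) (translation_derive c)); [|reflexivity].
  intros _ H1. injection H1. lra.
Qed.

Theorem proposition3p14 :
  exists f : C -> C, elh f /\
    exists g1 g2 : C -> C, elh g1 /\ elh g2 /\ g1 <> g2 /\
      (fun z => f (g1 z)) = (fun z => f (g2 z)).
Proof.
  exists cexp. split; [exact elh_cexp|].
  exists (fun z => (z + 0)%C), (fun z => (z + two_PI_i)%C).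
  split; [apply elh_translation|]. split; [apply elh_translation|]. split.
  - intros Heq. pose proof (f_equal (fun g : C -> C => snd (g 0%C)) Heq) as Him.
    simpl in Him. pose proof PI_RGT_0. lra.
  - apply functional_extensionality. intros z. rewrite Cplus_0_r. symmetry. apply cexp_periodic.
Qed.
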